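(* Let $m\ge3$ and let $\mathscr{P}$ be a symmetric transition probability tensor of order $m$ and dimension $2$. Then $\mathscr{P}$ has a unique positive stationary probability vector (i.e., one with both entries strictly positive), and it equals $(\tfrac12,\tfrac12)^\top$.
   Context: $\mathscr{P}=(p_{i_1\cdots i_m})$ is a tensor of order $m$ and dimension $2$ with real entries indexed by $i_1,\dots,i_m\in\{1,2\}$. It is symmetric if its entries are invariant under every permutation of indices. It is a transition probability tensor if $0\le p_{i_1\cdots i_m}\le1$ and $\sum_{i_1=1}^2p_{i_1i_2\cdots i_m}=1$ for all $i_2,\dots,i_m$. A stationary probability vector of $\mathscr{P}$ is a vector $z=(z_1,z_2)^\top$ with $z_1,z_2\ge0$ and $z_1+z_2=1$ such that $$\sum_{i_2,\dots,i_m=1}^2p_{ii_2\cdots i_m}z_{i_2}\cdots z_{i_m}=z_i\quad\text{for } i=1,2.$$ *)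

From HB Require Import structures.
From mathcomp Require Import all_boot all_order all_algebra all_fingroup.
Set Implicit Arguments. Unset Strict Implicit. Unset Printing Implicit Defensive.
Import Order.TTheory GRing.Theory Num.Theory.
Local Open Scope ring_scope.

(* A tensor of order m and dimension 2: entries indexed by (i_1,...,i_m),
   encoded as functions f : 'I_m -> 'I_2 (position k holds index i_{k+1};
   values 0,1 of 'I_2 stand for indices 1,2). *)
Definition tensor2 (R : Type) (m : nat) := {ffun 'I_m -> 'I_2} -> R.

Definition symmetric_tensor (R : Type) (m : nat) (P : tensor2 R m) : Prop :=
  forall (s : 'S_m) (f : {ffun 'I_m -> 'I_2}), P [ffun k => f (s k)] = P f.

Definition same_tail (m : nat) (f g : {ffun 'I_m -> 'I_2}) : bool :=
  [forall k : 'I_m, (val k != 0%N) ==> (g k == f k)].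

Definition transition_prob_tensor (R : numDomainType) (m : nat) (P : tensor2 R m) : Prop :=
  (forall f, 0 <= P f <= 1) /\
  (forall f, \sum_(g | same_tail f g) P g = 1).

Definition stationary_prob_vector (R : numDomainType) (m : nat) (P : tensor2 R m)
    (z : 'I_2 -> R) : Prop :=
  (forall i, 0 <= z i) /\ (\sum_(i < 2) z i = 1) /\
  (forall i : 'I_2,
     \sum_(f : {ffun 'I_m -> 'I_2} | [forall k : 'I_m, (val k == 0%N) ==> (f k == i)])
        P f * \prod_(k : 'I_m | val k != 0%N) z (f k) = z i).

Definition positive_stationary_prob_vector (R : numDomainType) (m : nat)
    (P : tensor2 R m) (z : 'I_2 -> R) : Prop :=
  stationary_prob_vector P z /\ (forall i, 0 < z i).

(** Symmetry and the column-sum condition force [P f + P f' = 1] whenever [f']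
    differs from [f] in exactly one index, so [2 P f - 1] equals
    [c := 2 P(1,...,1) - 1] times [(-1)^(number of indices equal to 2)].
    Consequently [2 (P z^{m-1})_i = (z_1 + z_2)^{m-1} + c (-1)^(i-1) (z_1 - z_2)^{m-1}],
    and for a stationary probability vector [d := z_1 - z_2] satisfies
    [d = c d^{m-1}] with [|c| <= 1] and, when [z > 0], [|d| < 1]; as [m - 1 >= 2]
    this forces [d = 0]. *)
From HB Require Import structures.
From mathcomp Require Import all_boot all_order all_algebra all_fingroup.
From mathcomp Require Import ring lra.
Set Implicit Arguments. Unset Strict Implicit. Unset Printing Implicit Defensive.
Import Order.TTheory GRing.Theory Num.Theory.
Local Open Scope ring_scope.

Lemma I2_eq_or_rev (a b : 'I_2) : b = a \/ b = rev_ord a.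
Proof.
by case: a b => [[|[|//]]] ? [[|[|//]]] ?; [left|right|right|left]; apply: val_inj.
Qed.

Lemma rev_ord2_neq (a : 'I_2) : rev_ord a != a.
Proof. by case: a => [[|[|//]]] ?. Qed.

Definition sgn2 (R : pzRingType) (b : 'I_2) : R := (-1) ^+ val b.

Lemma sgn2_rev (R : pzRingType) (a : 'I_2) : sgn2 R (rev_ord a) = - sgn2 R a.
Proof. by case: a => [[|[|//]]] ?; rewrite /sgn2 /= ?opprK ?expr0 ?expr1. Qed.

Lemma sgn2_sqr (R : pzRingType) (a : 'I_2) : sgn2 R a * sgn2 R a = 1.
Proof. by rewrite -expr2 /sgn2 -exprM mulnC exprM sqrrN !expr1n. Qed.

Lemma big_I2 (R : Type) (idx : R) (op : Monoid.law idx) (F : 'I_2 -> R) :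
  \big[op/idx]_(i < 2) F i = op (F ord0) (F ord_max).
Proof. by rewrite big_ord_recl big_ord1; congr (op _ (F _)); apply: val_inj. Qed.

Section Flip.
Variable m : nat.
Implicit Types f g : {ffun 'I_m -> 'I_2}.

Definition flip f (k : 'I_m) : {ffun 'I_m -> 'I_2} :=
  [ffun j => if j == k then rev_ord (f j) else f j].

Lemma flip_neq f k : flip f k != f.
Proof.
apply: contra (rev_ord2_neq (f k)) => /eqP /ffunP /(_ k).
by rewrite ffunE eqxx => ->.
Qed.

Lemma flip_perm (s : {perm 'I_m}) f k :
  [ffun j => flip f k (s j)] = flip [ffun j => f (s j)] (s^-1 k)%g.
Proof.
by apply/ffunP => j; rewrite !ffunE -{1}(permKV s k) (inj_eq (@perm_inj _ s)).
Qed.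

Lemma flip_card_ones f k : f k != ord0 ->
  (#|[pred j | flip f k j != ord0]| < #|[pred j | f j != ord0]|)%N.
Proof.
move=> fk; apply: proper_card; apply/properP; split.
  apply/subsetP => j; rewrite !inE ffunE.
  by case: (eqVneq j k) => [->|_]; rewrite ?fk.
exists k; rewrite !inE ?ffunE ?eqxx //.
by case: (f k) fk => [[|[|//]]].
Qed.

Lemma flip_invariant_const (T : Type) (F : {ffun 'I_m -> 'I_2} -> T) :
  (forall f k, F (flip f k) = F f) -> forall f, F f = F [ffun => ord0].
Proof.
move=> Fflip f; have [w] := ubnP #|[pred j | f j != ord0]|.
elim: w f => // w IH f ltfw.
case: (pickP [pred j | f j != ord0]) => [k /= fk | f0].
  by rewrite -(Fflip f k) IH // (leq_trans (flip_card_ones fk)).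
congr F; apply/ffunP => j; rewrite ffunE; exact/eqP/negbFE/f0.
Qed.

End Flip.

Lemma prod_sgn2_flip (R : comPzRingType) m (f : {ffun 'I_m -> 'I_2}) k :
  \prod_j sgn2 R (flip f k j) = - \prod_j sgn2 R (f j).
Proof.
rewrite (bigD1 k) //= [in RHS](bigD1 k) //= ffunE eqxx sgn2_rev mulNr.
by congr (- (_ * _)); apply: eq_bigr => j /negbTE jk; rewrite ffunE jk.
Qed.

Definition head_is m (i : 'I_2) (f : {ffun 'I_m -> 'I_2}) : bool :=
  [forall k : 'I_m, (val k == 0%N) ==> (f k == i)].

(* [tensor_apply P z i] is the entry [(P z^{m-1})_i] of the paper. *)
Definition tensor_apply (R : pzSemiRingType) m (P : tensor2 R m) (z : 'I_2 -> R) i :=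
  \sum_(f | head_is i f) P f * \prod_(k : 'I_m | val k != 0%N) z (f k).

Lemma sum_head_prod_tail (R : comPzSemiRingType) m (i : 'I_2) (F : 'I_m -> 'I_2 -> R) :
  \sum_(f | head_is i f) \prod_(k : 'I_m | val k != 0%N) F k (f k)
  = \prod_(k : 'I_m | val k != 0%N) \sum_j F k j.
Proof.
rewrite (big_distr_big_dep i); apply: eq_bigl => f.
apply/forallP/pfamilyP => [head_f | [/subsetP tail_f _] k]; last first.
  by apply/implyP; apply: contraLR => /tail_f.
split=> //; apply/subsetP => k; rewrite !inE.
by apply: contraR => /negPn k0; rewrite (eqP (implyP (head_f k) k0)).
Qed.

Lemma prod_tail_const (R : pzSemiRingType) m (x : R) :
  \prod_(k : 'I_m.+1 | val k != 0%N) x = x ^+ m.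
Proof.
by rewrite prodr_const (@eq_card _ _ (predC1 ord0)) ?cardC1 ?card_ord.
Qed.

Section SymmetricTransitionTensor.
Variables (R : comPzRingType) (n : nat) (P : tensor2 R n.+1).
Hypothesis P_sym : symmetric_tensor P.
Hypothesis P_colsum : forall f, \sum_(g | same_tail f g) P g = 1.
Implicit Types f g : {ffun 'I_n.+1 -> 'I_2}.

Lemma same_tail_flip0 f g : same_tail f g = (g == f) || (g == flip f ord0).
Proof.
apply/forallP/idP => [tail_eq | /orP[] /eqP-> k]; last 2 first.
- exact/implyP.
- by apply/implyP => k0; rewrite ffunE ifN.
have gk k : k != ord0 -> g k = f k by move=> k0; apply/eqP/(implyP (tail_eq k)).
have [g0|g0] := I2_eq_or_rev (f ord0) (g ord0); apply/orP; [left|right];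
  apply/eqP/ffunP => k; rewrite ?ffunE; case: (eqVneq k ord0) => [->|/gk] //.
Qed.

Lemma P_add_flip0 f : P f + P (flip f ord0) = 1.
Proof.
rewrite -(P_colsum f) (bigD1 f) ?same_tail_flip0 ?eqxx //=.
rewrite (big_pred1 (flip f ord0)) // => g /=; rewrite same_tail_flip0.
case: eqP => [->|_] /=; last by rewrite andbT.
by rewrite eq_sym (negbTE (flip_neq f ord0)).
Qed.

Lemma P_add_flip f k : P f + P (flip f k) = 1.
Proof.
pose s := tperm ord0 k.
rewrite -(P_sym s f) -(P_sym s (flip f k)) flip_perm tpermV tpermR.
exact: P_add_flip0.
Qed.

Lemma P_sign f :
  2 * P f - 1 = (2 * P [ffun => ord0] - 1) * \prod_k sgn2 R (f k).
Proof.
pose F f := (2 * P f - 1) * \prod_k sgn2 R (f k).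
have F_flip g k : F (flip g k) = F g.
  rewrite /F prod_sgn2_flip.
  have -> : P (flip g k) = 1 - P g by rewrite -(P_add_flip g k) addrC addKr.
  ring.
have F0 : F [ffun => ord0] = 2 * P [ffun => ord0] - 1.
  by rewrite /F big1 ?mulr1 // => k _; rewrite ffunE.
rewrite -F0 -(flip_invariant_const F_flip f) /F -mulrA -big_split /=.
by rewrite big1 ?mulr1 // => k _; exact: sgn2_sqr.
Qed.

Lemma tensor_apply_sign (z : 'I_2 -> R) i :
  2 * tensor_apply P z i = (\sum_j z j) ^+ n
    + (2 * P [ffun => ord0] - 1) * sgn2 R i * (\sum_j sgn2 R j * z j) ^+ n.
Proof.
rewrite /tensor_apply mulr_sumr.
under eq_bigr => f head_f.
  have P_f : 2 * P f = 1 + (2 * P [ffun => ord0] - 1) * \prod_k sgn2 R (f k).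
    by rewrite -P_sign addrC subrK.
  have f0 : f ord0 = i by exact/eqP/(implyP (forallP head_f ord0)).
  rewrite mulrA P_f (bigD1 ord0) //= f0 mulrDl mul1r -!mulrA -big_split /=.
  over.
rewrite big_split /= -!mulr_sumr (sum_head_prod_tail i (fun _ j => z j)).
rewrite (sum_head_prod_tail i (fun _ j => sgn2 R j * z j)) !prod_tail_const.
by rewrite mulrA.
Qed.

End SymmetricTransitionTensor.

Lemma pow_fixed_point_eq0 (R : realDomainType) n (a d : R) :
  (1 < n)%N -> `|a| <= 1 -> `|d| < 1 -> d = a * d ^+ n -> d = 0.
Proof.
move=> n_gt1 a_le1 d_lt1 d_fix; apply/eqP/negPn/negP => d_neq0.
have d_pos : 0 < `|d| by rewrite normr_gt0.
have : `|d| <= `|d| ^+ n by rewrite {1}d_fix normrM normrX ler_piMl ?exprn_ge0.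
by rewrite leNgt (ltr_iXnr _ d_pos d_lt1) n_gt1.
Qed.

Theorem corollary2p1 (R : realFieldType) (m : nat) (P : tensor2 R m) :
  (3 <= m)%N ->
  symmetric_tensor P ->
  transition_prob_tensor P ->
  positive_stationary_prob_vector P (fun _ => 2^-1) /\
  (forall z : 'I_2 -> R, positive_stationary_prob_vector P z ->
     forall i, z i = 2^-1).
Proof.
case: m P => [|n] P //; rewrite ltnS => n_gt1 P_sym [P_bnd P_colsum].
set c := 2 * P [ffun => ord0] - 1.
have c_le1 : `|c| <= 1.
  by have /andP[? ?] := P_bnd [ffun => ord0]; rewrite /c ler_norml; apply/andP; split; lra.
have stat z i : \sum_j z j = 1 ->
    2 * tensor_apply P z i = 1 + c * sgn2 R i * (z ord0 - z ord_max) ^+ n.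
  move=> z_sum; rewrite tensor_apply_sign // z_sum expr1n big_I2.
  by rewrite /sgn2 /= expr0 expr1 mul1r mulN1r.
split.
  split; [split; [by move=> i; rewrite invr_ge0 ler0n | split] |].
  - by rewrite big_I2 /=; lra.
  - move=> i; change (tensor_apply P (fun _ => 2^-1) i = 2^-1).
    have := stat (fun _ => 2^-1) i; rewrite big_I2 subrr expr0n /= (gtn_eqF (ltnW n_gt1)).
    by rewrite mulr0 addr0 => /(_ ltac:(lra)); lra.
  - by move=> i; rewrite invr_gt0 ltr0n.
move=> z [[_ [z_sum z_stat]] z_gt0] i.
have := stat z ord0 z_sum; rewrite (z_stat ord0 : tensor_apply P z ord0 = z ord0).
rewrite /sgn2 /= expr0 mulr1; rewrite big_I2 /= in z_sum.
set d := z ord0 - z ord_max => z0E.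
have d_fix : d = c * d ^+ n by rewrite {1}/d; lra.
have d_lt1 : `|d| < 1.
  by have := z_gt0 ord0; have := z_gt0 ord_max; rewrite /d ltr_norml; lra.
have := pow_fixed_point_eq0 n_gt1 c_le1 d_lt1 d_fix; rewrite /d => d0.
have [->|->] : i = ord0 \/ i = ord_max by case: i => [[|[|//]]] ?; [left|right]; exact: val_inj.
all: lra.
Qed.
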